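(* For all integers $d \geq 1$, $r \geq 2$ and $k > 2r(d-1)$, there exists a constant $C$ such that for all $n > k$, $$f(n,k,d,r) \leq n\,\frac{k-2r(d-1)}{r\,(k-(r+1)(d-1))} + C.$$ In particular, $f(n,k,d,2) \leq \frac{k-4d+4}{2(k-3d+3)}\,n + C$.
   Context: All graphs are finite, simple and undirected. The order of a graph is its number of vertices. For a graph $G$ and positive integers $d, r$, let $f_G(d,r)$ be the largest integer $t$ such that in every coloring of the edges of $G$ with $r$ colors there is a monochromatic subgraph (all of its edges of one color) with minimum degree at least $d$ and order at least $t$. For integers $n > k > d$, let $f(n,k,d,r)$ be the minimum of $f_G(d,r)$ over all graphs $G$ with $n$ vertices and minimum degree at least $k$. *)

From mathcomp Require Import all_boot all_order all_algebra.
Set Implicit Arguments. Unset Strict Implicit. Unset Printing Implicit Defensive.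

Definition simple_graph n (E : {set 'I_n * 'I_n}) : bool :=
  [forall u : 'I_n, (u, u) \notin E] &&
  [forall u : 'I_n, forall v : 'I_n, ((u, v) \in E) == ((v, u) \in E)].

Definition min_deg_ge n (E : {set 'I_n * 'I_n}) (k : nat) : bool :=
  [forall v : 'I_n, k <= #|[set u : 'I_n | (v, u) \in E]|].

Definition edge_coloring n r (E : {set 'I_n * 'I_n})
    (c : {ffun 'I_n * 'I_n -> 'I_r}) : bool :=
  [forall u : 'I_n, forall v : 'I_n, ((u, v) \in E) ==> (c (u, v) == c (v, u))].

Definition mono_mindeg n r (E : {set 'I_n * 'I_n})
    (c : {ffun 'I_n * 'I_n -> 'I_r}) (d : nat) (S : {set 'I_n}) : bool :=
  [exists i : 'I_r, [forall v in S,
     d <= #|[set u in S | ((v, u) \in E) && (c (v, u) == i)]| ]].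

Definition fG n (E : {set 'I_n * 'I_n}) (d r : nat) : nat :=
  \max_(t < n.+1 | [forall c : {ffun 'I_n * 'I_n -> 'I_r},
        edge_coloring E c ==>
        [exists S : {set 'I_n}, (t <= #|S|) && mono_mindeg E c d S]]) t.

(* f(n,k,d,r): minimum of f_G(d,r) over graphs on n vertices with minimum
   degree >= k (K_n shows the range is nonempty when n > k). *)
Definition f (n k d r : nat) : nat :=
  \big[minn/n]_(E : {set 'I_n * 'I_n} | simple_graph E && min_deg_ge E k)
     fG E d r.

From mathcomp Require Import all_boot all_order all_algebra.
From mathcomp Require Import zify.
Import GRing.Theory Num.Theory.
Set Implicit Arguments. Unset Strict Implicit. Unset Printing Implicit Defensive.

(* For n large, take r cliques K_m, the j-th one coloured j, and a path whose
   r(d-1)-th power is coloured by edge length so that every path vertex has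
   exactly d - 1 neighbours of each colour further along the path.  Each
   clique vertex sends d - 1 edges of each colour other than its clique's to
   the path, raising the path degrees to k; since a path vertex needs about
   q = k - 2r(d-1) such edges, the path has about (r-1)(d-1) r m / q vertices,
   which forces m ~ q n / (r (k - (r+1)(d-1))).  Ordering the cliques before
   the path, every vertex outside clique c has at most d - 1 later neighbours
   of colour c, except for the O(1) path vertices left over at the end, which
   are joined to clique 0 only.  Hence a monochromatic subgraph of colour c
   with minimum degree d lies in clique c plus these leftover vertices. *)

Lemma divn_eq_between x y z : 0 < x -> x * y <= z < x * y + x -> z %/ x = y.
Proof.
move=> x0 /andP[h1 h2].
have -> : z = y * x + (z - x * y) by lia.
by rewrite divnMDl // divn_small ?addn0 //; lia.
Qed.

Lemma card_ge_inj n (y0 : 'I_n) (A : {set 'I_n}) k (h : nat -> nat) :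
  (forall i, i < k -> h i < n) ->
  (forall i j, i < k -> j < k -> h i = h j -> i = j) ->
  (forall i, i < k -> insubd y0 (h i) \in A) -> k <= #|A|.
Proof.
move=> h_lt h_inj h_in.
pose F (i : 'I_k) := insubd y0 (h i).
have F_inj : injective F.
  move=> i j /(congr1 val); rewrite /F !val_insubd !h_lt // => e.
  exact/val_inj/(h_inj _ _ (ltn_ord i) (ltn_ord j) e).
rewrite -{1}(card_ord k) -(card_imset _ F_inj).
by apply/subset_leq_card/subsetP => y /imsetP[i _ ->]; exact: h_in.
Qed.

Lemma card_le_cover n (y0 : 'I_n) (A : {set 'I_n}) m (h : nat -> nat) :
  (forall y, y \in A -> exists2 i, i < m & val y = h i) -> #|A| <= m.
Proof.
move=> cover; pose F (i : 'I_m) := insubd y0 (h i).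
apply: (@leq_trans #|F @: 'I_m|); last by rewrite (leq_trans (leq_imset_card _ _)) ?card_ord.
apply/subset_leq_card/subsetP => y /cover[i im e].
by apply/imsetP; exists (Ordinal im); rewrite // /F -e valKd.
Qed.

Lemma f_le_fG n k d r (E : {set 'I_n * 'I_n}) :
  simple_graph E -> min_deg_ge E k -> f n k d r <= fG E d r.
Proof.
move=> simpleE degE; rewrite /f; have : E \in index_enum _ by rewrite mem_index_enum.
elim: (index_enum _) => [//|E' s IHs]; rewrite inE big_cons => /predU1P[<-|Es].
  by rewrite simpleE degE geq_minl.
by case: ifP => _; [exact: leq_trans (geq_minr _ _) (IHs Es) | exact: IHs].
Qed.

Lemma f_le_order n k d r : f n k d r <= n.
Proof.
rewrite /f; elim/big_ind: _ => // [x y|E _]; first by rewrite geq_min => ->.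
by apply/bigmax_leqP => t _; rewrite -ltnS.
Qed.

Lemma fG_le_of_coloring n r d (E : {set 'I_n * 'I_n})
    (c : {ffun 'I_n * 'I_n -> 'I_r}) b :
  edge_coloring E c -> (forall S, mono_mindeg E c d S -> #|S| <= b) ->
  fG E d r <= b.
Proof.
move=> col_c small; apply/bigmax_leqP => t /forallP /(_ c) /implyP /(_ col_c).
by case/existsP => S /andP[tS /small]; exact: leq_trans.
Qed.

(* A vertex of minimum rank outside [core] would have fewer than d neighbours
   of colour i in S. *)
Lemma mindeg_sub_core n r d (E : {set 'I_n * 'I_n})
    (c : {ffun 'I_n * 'I_n -> 'I_r}) (i : 'I_r) (core : pred 'I_n)
    (rank : 'I_n -> nat) (S : {set 'I_n}) :
  (forall y, ~~ core y -> #|[set u | [&& (y, u) \in E, c (y, u) == i &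
                                        core u || (rank y <= rank u)]]| < d) ->
  [forall v in S, d <= #|[set u in S | ((v, u) \in E) && (c (v, u) == i)]|] ->
  {subset S <= core}.
Proof.
move=> few_forward /forall_inP mindegS x xS; apply/negPn/negP => x_out.
have [y /andP[yS y_out] y_min] :=
  @arg_minnP _ x (fun y => (y \in S) && ~~ core y) rank (introT andP (conj xS x_out)).
have forward_sub : [set u in S | ((y, u) \in E) && (c (y, u) == i)] \subset
    [set u | [&& (y, u) \in E, c (y, u) == i & core u || (rank y <= rank u)]].
  apply/subsetP => u; rewrite !inE => /and3P[uS -> ->] /=.
  by case: (boolP (core u)) => //= u_out; apply: y_min; rewrite uS.
have := leq_trans (mindegS y yS) (subset_leq_card forward_sub).
by rewrite leqNgt few_forward.
Qed.

Section Construction.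

Variables n r d k m M : nat.

(* Vertices [0, ncl) form r cliques of size m, the j-th one coloured j;
   vertex ncl + a is the a-th vertex of a path whose span-th power is coloured
   by edge length, lengths ((d-1)c, (d-1)(c+1)] getting colour c.  Clique
   vertex x owns the ports l * ncl + x for l < nlayers, the ports of layers
   [(d-1)b, (d-1)(b+1)) carrying the b-th colour other than that of its
   clique.  The first nwin path vertices own consecutive windows of ports
   (of k ports for the first span of them, of slack ports afterwards) and are
   joined to the owners of their ports, in the colour of the port; the
   remaining path vertices are joined to all of clique 0 in colour 0. *)
Definition span := r * (d - 1).
Definition nlayers := (r - 1) * (d - 1).
Definition slack := k - 2 * span.
Definition ncl := r * m.
Definition nwin := span + M.

Definition win_start a :=
  if a < span then k * a else k * span + slack * (a - span).
Definition win_len a := if a < span then k else slack.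
Definition win_owner p :=
  if p < k * span then p %/ k else span + (p - k * span) %/ slack.
Definition port a x := win_start a + (x + ncl - win_start a %% ncl) %% ncl.
Definition clique x := x %/ m.
Definition layer_colour l j := bump j (l %/ (d - 1)).

Definition edge x y :=
  if y < ncl then clique x == clique y
  else if x < ncl then
    if nwin <= y - ncl then x < m
    else port (y - ncl) x < win_start (y - ncl) + win_len (y - ncl)
  else y - x <= span.

Definition edge_colour x y :=
  if y < ncl then clique x
  else if x < ncl then
    if nwin <= y - ncl then 0
    else layer_colour (port (y - ncl) x %/ ncl) (clique x)
  else (y - x - 1) %/ (d - 1).

Definition adj x y := (x != y) && edge (minn x y) (maxn x y).
Definition colour x y := edge_colour (minn x y) (maxn x y).

Definition core c x :=
  (x < ncl) && (clique x == c) || (c == 0) && (ncl + nwin <= x).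
Definition rank x := if x < ncl then 0 else x.
Definition fwd_nbr c x i :=
  if x < ncl then ncl + win_owner (x + (unbump (clique x) c * (d - 1) + i) * ncl)
  else x + c * (d - 1) + 1 + i.
Definition core_enum c i := if i < m then c * m + i else ncl + nwin + (i - m).

Hypothesis d_gt0 : 0 < d.
Hypothesis r_gt1 : 1 < r.
Hypothesis k_gt_span : 2 * span < k.
Hypothesis k_lt_m : k < m.
Hypothesis windows_fit : k * span + slack * M <= nlayers * ncl.
Hypothesis order_large : ncl + nwin + span <= n.

Lemma slack_gt0 : 0 < slack.
Proof. by rewrite /slack subn_gt0. Qed.
Lemma m_gt0 : 0 < m. Proof. exact: leq_ltn_trans (leq0n k) k_lt_m. Qed.
Lemma m_le_ncl : m <= ncl. Proof. rewrite /ncl; nia. Qed.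
Lemma ncl_gt0 : 0 < ncl. Proof. have := m_le_ncl; lia. Qed.

Lemma adjC x y : adj x y = adj y x.
Proof. by rewrite /adj minnC maxnC eq_sym. Qed.

Lemma colourC x y : colour x y = colour y x.
Proof. by rewrite /colour minnC maxnC. Qed.

Lemma adj_irr x : adj x x = false.
Proof. by rewrite /adj eqxx. Qed.

Lemma adj_edge x y : x < y -> adj x y = edge x y.
Proof.
by move=> xy; rewrite /adj (minn_idPl (ltnW xy)) (maxn_idPr (ltnW xy)) neq_ltn xy.
Qed.

Lemma colour_edge x y : x < y -> colour x y = edge_colour x y.
Proof. by move=> xy; rewrite /colour (minn_idPl (ltnW xy)) (maxn_idPr (ltnW xy)). Qed.

Lemma port_mod a x : x < ncl -> port a x %% ncl = x.
Proof.
move=> x_lt; rewrite /port modnDmr.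
have := ltn_pmod (win_start a) ncl_gt0; have := divn_eq (win_start a) ncl.
set s := win_start a => s_eq s_mod.
have -> : s + (x + ncl - s %% ncl) = (s %/ ncl + 1) * ncl + x by lia.
by rewrite modnMDl modn_small.
Qed.

Lemma port_bounds a x : win_start a <= port a x < win_start a + ncl.
Proof. by rewrite /port leq_addr ltn_add2l ltn_pmod // ncl_gt0. Qed.

Lemma port_window a i : i < ncl -> port a ((win_start a + i) %% ncl) = win_start a + i.
Proof.
move=> i_lt; have := port_bounds a ((win_start a + i) %% ncl).
have := port_mod a (ltn_pmod (win_start a + i) ncl_gt0).
set p := port a _; set s := win_start a => p_mod p_bounds.
have -> : p = s + (p - s) by lia.
congr (_ + _); apply/eqP; rewrite -(modn_small i_lt) -(modn_small (_ : p - s < ncl)); last by lia.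
by rewrite -(eqn_modDl s) subnKC ?p_mod //; lia.
Qed.

Lemma win_owner_in a p : win_start a <= p < win_start a + win_len a -> win_owner p = a.
Proof.
have := slack_gt0; rewrite /win_start /win_len /win_owner.
case: ifP => a_lt slack_pos /andP[p_ge p_lt].
  have -> : p < k * span by apply: (leq_trans p_lt); rewrite -mulnSr leq_mul2l; lia.
  by apply: divn_eq_between; rewrite ?p_ge ?p_lt //; lia.
move: p_ge p_lt; set z := slack * (a - span) => p_ge p_lt.
have -> : (p < k * span) = false by lia.
by rewrite (@divn_eq_between slack (a - span)) -/z //; lia.
Qed.

Lemma win_end_le a : a < nwin -> win_start a + win_len a <= k * span + slack * M.
Proof.
rewrite /nwin /win_start /win_len => a_lt; case: ifP => a_span.
  suff : k * a.+1 <= k * span by lia.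
  by rewrite leq_mul2l; lia.
suff : slack * (a - span).+1 <= slack * M by lia.
by rewrite leq_mul2l; lia.
Qed.

Lemma port_layer_lt a x : a < nwin -> port a x < win_start a + win_len a ->
  port a x %/ ncl < nlayers.
Proof.
move=> a_lt p_lt; rewrite ltn_divLR ?ncl_gt0 // mulnC.
by have := win_end_le a_lt; lia.
Qed.

Lemma layer_d1_gt0 l : l < nlayers -> 0 < d - 1.
Proof. by rewrite /nlayers; case: (d - 1) => //; rewrite muln0. Qed.

Lemma layer_colour_lt l j : l < nlayers -> layer_colour l j < r.
Proof.
move=> l_lt; have d1_gt0 := layer_d1_gt0 l_lt.
have : l %/ (d - 1) < r - 1 by rewrite ltn_divLR // mulnC.
by rewrite /layer_colour /bump; lia.
Qed.

Lemma layer_colour_neq l j : layer_colour l j != j.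
Proof. by rewrite eq_sym neq_bump. Qed.

Lemma clique_lt x : x < ncl -> clique x < r.
Proof. by rewrite /clique /ncl ltn_divLR; lia. Qed.

Lemma clique_small x : x < m -> clique x = 0.
Proof. by move=> x_lt; rewrite /clique divn_small. Qed.

Lemma colour_lt x y : adj x y -> colour x y < r.
Proof.
wlog xy : x y / x < y.
  move=> hw; case: (ltngtP x y) => [|yx|->]; [exact: hw | | by rewrite adj_irr].
  by rewrite adjC colourC; exact: hw.
rewrite adj_edge // colour_edge // /edge /edge_colour.
case: ifP => y_cl; first by move=> _; apply: clique_lt; lia.
case: ifP => x_cl.
  case: ifP => a_win; first lia.
  by move=> p_lt; apply/layer_colour_lt/port_layer_lt/p_lt; lia.
move=> dist_le; have : 0 < span by lia.
rewrite /span muln_gt0 => /andP[_ d1_gt0].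
by rewrite ltn_divLR //; move: dist_le; rewrite /span; lia.
Qed.

Lemma fwd_nbr_of_clique c x u : x < ncl -> clique x != c ->
  adj x u -> colour x u = c -> exists2 i, i < d - 1 & u = fwd_nbr c x i.
Proof.
move=> x_cl x_c; case: (ltngtP x u) => [xu|ux|<-]; last by rewrite adj_irr.
  rewrite adj_edge // colour_edge // /edge /edge_colour.
  case: ifP => u_cl; first by move=> _ x_u; rewrite x_u eqxx in x_c.
  rewrite x_cl; case: ifP => a_win.
    by move=> /clique_small x0 c0; rewrite x0 -c0 in x_c.
  set a := u - ncl in a_win *; move=> p_lt colour_eq.
  set l := port a x %/ ncl in colour_eq.
  have l_lt : l < nlayers by apply: port_layer_lt p_lt; lia.
  have d1_gt0 := layer_d1_gt0 l_lt.
  exists (l %% (d - 1)); first by rewrite ltn_mod.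
  rewrite /fwd_nbr x_cl -colour_eq /layer_colour bumpK -divn_eq.
  have -> : x + l * ncl = port a x.
    by rewrite /l addnC [in RHS](divn_eq (port a x) ncl) port_mod.
  by rewrite (@win_owner_in a); [lia | have := port_bounds a x; lia].
rewrite adjC colourC adj_edge // colour_edge // /edge /edge_colour x_cl.
by move=> /eqP -> c_eq; rewrite c_eq eqxx in x_c.
Qed.

Lemma fwd_nbr_of_path c x u : ncl <= x -> ~~ core c x ->
  adj x u -> colour x u = c -> core c u || (x <= rank u) ->
  exists2 i, i < d - 1 & u = fwd_nbr c x i.
Proof.
move=> x_path; have x_cl : (x < ncl) = false by rewrite ltnNge x_path.
rewrite /core /rank x_cl /= => x_out.
case: (ltngtP x u) => [xu|ux|<-]; last by rewrite adj_irr.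
  have u_cl : (u < ncl) = false by lia.
  rewrite adj_edge // colour_edge // /edge /edge_colour x_cl u_cl.
  move=> dist_le dist_colour _.
  have d1_gt0 : 0 < d - 1 by move: dist_le; rewrite /span; case: (d - 1); lia.
  exists ((u - x - 1) %% (d - 1)); first by rewrite ltn_mod.
  by have := divn_eq (u - x - 1) (d - 1); rewrite /fwd_nbr x_cl dist_colour; lia.
rewrite adjC colourC adj_edge // colour_edge // /edge /edge_colour x_cl /=.
case: ifP => u_cl; last by move=> _ _; case: eqP => c0 /=; lia.
case: ifP => a_win => [_ c0|_ colour_eq]; first by rewrite -c0 eqxx /= in x_out; lia.
have := layer_colour_neq (port (x - ncl) u %/ ncl) (clique u).
by rewrite colour_eq eq_sym => /negbTE ->; case: eqP; lia.
Qed.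

Lemma win_len_le a : win_len a <= k.
Proof. by rewrite /win_len /slack; case: ifP; lia. Qed.

Lemma adj_clique x y : x < ncl -> y < ncl ->
  adj x y = (x != y) && (clique x == clique y).
Proof.
move=> x_cl y_cl; rewrite /adj /edge; case: (leqP x y) => _; first by rewrite y_cl.
by rewrite x_cl [clique y == _]eq_sym.
Qed.

Lemma adj_path x y : ncl <= x < y -> y - x <= span -> adj x y.
Proof.
move=> x_in dist_le; have [x_cl y_cl] : (x < ncl) = false /\ (y < ncl) = false by lia.
by rewrite adj_edge /edge ?x_cl ?y_cl //; lia.
Qed.

Lemma adj_window a i : a < nwin -> i < win_len a ->
  adj (ncl + a) ((win_start a + i) %% ncl).
Proof.
move=> a_win i_lt; have w_lt := ltn_pmod (win_start a + i) ncl_gt0.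
have i_cl : i < ncl by have := win_len_le a; have := m_le_ncl; lia.
rewrite adjC adj_edge ?(leq_trans w_lt (leq_addr _ _)) //.
by rewrite /edge ltnNge leq_addr /= w_lt addKn leqNgt a_win /= port_window ?ltn_add2l.
Qed.

Lemma window_inj a i j : i < ncl -> j < ncl ->
  (win_start a + i) %% ncl = (win_start a + j) %% ncl -> i = j.
Proof. by move=> i_lt j_lt /(congr1 (port a)); rewrite !port_window //; apply: addnI. Qed.

Definition has_k_nbrs x := exists h : nat -> nat,
  [/\ forall i, i < k -> h i < n,
      forall i j, i < k -> j < k -> h i = h j -> i = j &
      forall i, i < k -> adj x (h i)].

Lemma clique_has_k_nbrs x : x < ncl -> has_k_nbrs x.
Proof.
move=> x_cl; set j := clique x.
have j_lt : j < r := clique_lt x_cl.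
have jm_le : j * m + m <= ncl by rewrite /ncl -mulSnr leq_mul2r; lia.
have x_in : j * m <= x < j * m + m.
  by have := divn_eq x m; rewrite -[x %/ m]/j; have := ltn_pmod x m_gt0; lia.
have clique_eq y : j * m <= y < j * m + m -> clique y = j.
  by move=> y_in; apply: divn_eq_between; rewrite 1?mulnC //; lia.
exists (fun i => if j * m + i < x then j * m + i else j * m + i + 1); split.
- by move=> i i_lt; case: ifP; lia.
- by move=> i i' i_lt i'_lt; case: ifP; case: ifP; lia.
move=> i i_lt; case: ifP => i_x; rewrite adj_clique ?clique_eq ?eqxx ?andbT; lia.
Qed.

Lemma start_has_k_nbrs a : a < span -> has_k_nbrs (ncl + a).
Proof.
move=> a_lt; have k_cl : k < ncl by have := m_le_ncl; lia.
exists (fun i => (win_start a + i) %% ncl); split.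
- by move=> i _; apply: leq_trans (ltn_pmod _ ncl_gt0) _; lia.
- by move=> i j i_lt j_lt /window_inj; apply; lia.
by move=> i i_lt; apply: adj_window; rewrite /nwin /win_len ?a_lt; lia.
Qed.

Lemma middle_has_k_nbrs a : span <= a < nwin -> has_k_nbrs (ncl + a).
Proof.
move=> a_in; have w_lt i := ltn_pmod (win_start a + i) ncl_gt0.
have k_cl : k < ncl by have := m_le_ncl; lia.
exists (fun i => if i < span then ncl + a - 1 - i
                 else if i < 2 * span then ncl + a + 1 + (i - span)
                 else (win_start a + (i - 2 * span)) %% ncl); split.
- move=> i i_lt; case: ifP => [|_]; first lia.
  by case: ifP => [|_]; [lia | apply: leq_trans (w_lt _) _; lia].
- move=> i j i_lt j_lt; have := w_lt (i - 2 * span); have := w_lt (j - 2 * span).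
  case: (ltnP i span) => ?; case: (ltnP j span) => ?;
  case: (ltnP i (2 * span)) => ?; case: (ltnP j (2 * span)) => ? /=; try lia.
  by move=> _ _ /window_inj; lia.
move=> i i_lt; case: ifP => [i_span|_]; first by rewrite adjC adj_path; lia.
case: ifP => [i_span|i_span]; first by rewrite adj_path; lia.
by apply: adj_window; [lia | rewrite /win_len ifN /slack; lia].
Qed.

Lemma end_has_k_nbrs a : nwin <= a -> has_k_nbrs (ncl + a).
Proof.
move=> a_win; have k_cl : k < ncl by have := m_le_ncl; lia.
exists id; split=> // i i_lt; first lia.
rewrite adjC adj_edge; last lia.
by rewrite /edge ltnNge leq_addr /= addKn a_win ifT //; lia.
Qed.

Lemma has_k_nbrs_all x : has_k_nbrs x.
Proof.
case: (ltnP x ncl) => [|x_path]; first exact: clique_has_k_nbrs.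
rewrite -(subnKC x_path); set a := x - ncl.
case: (ltnP a span) => [|a_span]; first exact: start_has_k_nbrs.
case: (ltnP a nwin) => [a_win|]; last exact: end_has_k_nbrs.
by apply: middle_has_k_nbrs; rewrite a_span.
Qed.

Lemma core_enum_cover c x : x < n -> core c x ->
  exists2 i, i < m + (n - ncl - nwin) & x = core_enum c i.
Proof.
rewrite /core /core_enum => x_lt /orP[/andP[x_cl /eqP x_c]|/andP[_ x_end]].
  have x_mod := ltn_pmod x m_gt0.
  exists (x %% m); first lia.
  by rewrite x_mod -x_c /clique -divn_eq.
by exists (m + (x - ncl - nwin)); rewrite ?ifN; lia.
Qed.

Definition constr_graph : {set 'I_n * 'I_n} := [set p : 'I_n * 'I_n | adj p.1 p.2].

Definition constr_colouring (i0 : 'I_r) : {ffun 'I_n * 'I_n -> 'I_r} :=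
  [ffun p : 'I_n * 'I_n => insubd i0 (colour p.1 p.2)].

Lemma n_gt0 : 0 < n.
Proof. by have := ncl_gt0; lia. Qed.

Lemma constr_simple : simple_graph constr_graph.
Proof.
apply/andP; split; first by apply/forallP => u; rewrite inE adj_irr.
by apply/forallP => u; apply/forallP => v; rewrite !inE adjC.
Qed.

Lemma constr_min_deg : min_deg_ge constr_graph k.
Proof.
apply/forallP => v; have [h [h_lt h_inj h_adj]] := has_k_nbrs_all v.
apply: (card_ge_inj (y0 := Ordinal n_gt0) h_lt h_inj) => i i_lt.
by rewrite !inE val_insubd h_lt // h_adj.
Qed.

Lemma constr_edge_coloring i0 : edge_coloring constr_graph (constr_colouring i0).
Proof.
by apply/forallP => u; apply/forallP => v; apply/implyP => _; rewrite !ffunE colourC.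
Qed.

Lemma few_forward_nbrs (i0 i : 'I_r) (y : 'I_n) : ~~ core i y ->
  #|[set u | [&& (y, u) \in constr_graph, constr_colouring i0 (y, u) == i &
              core i u || (rank y <= rank u)]]| < d.
Proof.
move=> y_out; apply: (@leq_ltn_trans (d - 1)); last lia.
apply: (card_le_cover (Ordinal n_gt0) (h := fwd_nbr i y)).
move=> u; rewrite !inE ffunE /= => /and3P[y_u /eqP colour_eq fwd].
have {}colour_eq : colour y u = i by rewrite -colour_eq val_insubd colour_lt.
case: (ltnP y ncl) => [y_cl|y_path].
  have y_c : clique y != i by move: y_out; rewrite /core y_cl negb_or => /andP[].
  exact: fwd_nbr_of_clique y_cl y_c y_u colour_eq.
move: fwd; rewrite {1}/rank ltnNge y_path => fwd.
exact: fwd_nbr_of_path y_path y_out y_u colour_eq fwd.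
Qed.

Lemma constr_mono_card i0 S : mono_mindeg constr_graph (constr_colouring i0) d S ->
  #|S| <= m + (n - ncl - nwin).
Proof.
case/existsP => i /(mindeg_sub_core (@few_forward_nbrs i0 i)) S_core.
apply: (card_le_cover (Ordinal n_gt0) (h := core_enum i)) => x /S_core.
exact: core_enum_cover (ltn_ord x).
Qed.

Lemma f_le_core_size : f n k d r <= m + (n - ncl - nwin).
Proof.
have i0 : 'I_r := Ordinal (ltnW r_gt1).
apply: leq_trans (f_le_fG d r constr_simple constr_min_deg) _.
exact: fG_le_of_coloring (constr_edge_coloring i0) (@constr_mono_card i0).
Qed.

End Construction.

Lemma choose_sizes r k T L q : 0 < r -> 0 < q -> T <= r * L ->
  exists K n0, forall n, n0 <= n -> exists m M,
  [/\ k < m, k * T + q * M <= L * (r * m), r * m + (T + M) + T <= n,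
      n - r * m - (T + M) <= K & m * (r * (L + q)) <= q * n].
Proof.
move=> r_gt0 q_gt0 T_le; set D := r * (L + q).
have D_gt0 : 0 < D by rewrite muln_gt0 r_gt0 addn_gt0 q_gt0 orbT.
exists (D + q * T + k * T + q), (2 * T + (k * T + k + 1) * D).
move=> n n_ge; set m := q * (n - 2 * T) %/ D; set M := (L * (r * m) - k * T) %/ q.
have m_lo : m * D <= q * (n - 2 * T) by apply: leq_trunc_div.
have m_hi : q * (n - 2 * T) < m.+1 * D by apply: ltn_ceil.
have M_lo : M * q <= L * (r * m) - k * T by apply: leq_trunc_div.
have M_hi : L * (r * m) - k * T < M.+1 * q by apply: ltn_ceil.
have m_ge : k * T + k + 1 <= m.
  rewrite leq_divRL //; apply: leq_trans (leq_pmull _ q_gt0); lia.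
have kT_le : k * T <= L * (r * m).
  have k_le_m : k <= m by lia.
  by have := leq_mul k_le_m T_le; lia.
have mD : m * D = L * (r * m) + q * (r * m) by rewrite /D; lia.
exists m, M; split; try lia.
- suff : q * (r * m + M) <= q * (n - 2 * T) by rewrite leq_pmul2l //; lia.
  by move: m_lo; rewrite mD mulnDr [q * M]mulnC; set z := q * (n - 2 * T); lia.
- suff : q * (n - r * m - (T + M)) < D + q * T + k * T + q.
    by move/ltnW; apply: leq_trans; apply: leq_pmull.
  move: m_hi M_hi; rewrite (mulSn m D) mD (mulSn M q) [M * q]mulnC !mulnBr !mulnDr.
  lia.
Qed.

Lemma nlayers_add_slack r d k : 0 < r -> 2 * span r d < k ->
  nlayers r d + slack r d k = k - (r + 1) * (d - 1).
Proof.
rewrite /nlayers /slack /span mulnBl mulnDl !mul1n => r_gt0 k_gt.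
by have := leq_pmull (d - 1) r_gt0; lia.
Qed.

Lemma f_mul_le_linear d r k : 0 < d -> 1 < r -> 2 * span r d < k ->
  exists K, forall n,
    f n k d r * (r * (nlayers r d + slack r d k)) <= slack r d k * n + K.
Proof.
move=> d_gt0 r_gt1 k_gt.
have span_le : span r d <= r * nlayers r d.
  by rewrite /span /nlayers mulnA leq_mul2r leq_pmulr ?orbT //; lia.
have [K [n0 sizes]] := choose_sizes k (ltnW r_gt1) (slack_gt0 k_gt) span_le.
set D := r * _; exists ((K + n0) * D) => n; rewrite mulnDl.
case: (leqP n0 n) => [/sizes[m [M [k_lt fit large left m_le]]]|n_lt].
  have f_le : f n k d r <= m + K.
    by apply: leq_trans (f_le_core_size d_gt0 r_gt1 k_gt k_lt fit large) _; rewrite leq_add2l.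
  by have := leq_mul f_le (leqnn D); rewrite mulnDl; lia.
have f_le : f n k d r <= n0 by apply: leq_trans (f_le_order n k d r) (ltnW n_lt).
by have := leq_mul f_le (leqnn D); lia.
Qed.

Local Open Scope ring_scope.

Theorem theorem1p2 (d r k : nat) :
  (1 <= d)%N -> (2 <= r)%N -> (2 * r * (d - 1) < k)%N ->
  exists C : rat, forall n : nat, (k < n)%N ->
    (f n k d r)%:R <=
      n%:R * ((k%:R - (2 * r * (d - 1))%N%:R) /
              (r%:R * (k%:R - ((r + 1) * (d - 1))%N%:R))) + C.
Proof.
move=> d_gt0 r_gt1 k_gt.
have k_gt_span : (2 * span r d < k)%N by rewrite /span mulnA.
have [K f_le] := f_mul_le_linear d_gt0 r_gt1 k_gt_span.
have k_ge : ((r + 1) * (d - 1) <= k)%N by move: k_gt; nia.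
set D := (r * (nlayers r d + slack r d k))%N.
have D_gt0 : (0 < D)%N by rewrite muln_gt0 addn_gt0 (slack_gt0 k_gt_span) orbT; lia.
exists (K%:R / D%:R) => n _.
rewrite -!natrB ?(ltnW k_gt) // -natrM -mulnA -/(span r d) -/(slack r d k).
rewrite -(nlayers_add_slack (ltnW r_gt1) k_gt_span) -/D.
by rewrite mulrA -mulrDl ler_pdivlMr ?ltr0n // -!natrM -natrD ler_nat (mulnC n).
Qed.
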